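(* Let $t$ be a positive integer and let $G$ be a graph on $n$ vertices. Suppose that $|E(G)|>\left(1-\frac{1}{t+1}\right)(t-1)n$ if $t$ is odd, and $|E(G)|>\left(1-\frac{1}{t}\right)(t-1)n$ if $t$ is even. Then $G$ contains (as a subgraph) every tree $T$ having $t$ edges. *)

From HB Require Import structures.
From mathcomp Require Import all_boot all_order all_algebra.
Set Implicit Arguments. Unset Strict Implicit. Unset Printing Implicit Defensive.

Definition simple_graph (V : finType) (e : rel V) : Prop :=
  symmetric e /\ irreflexive e.

Definition edge_set (V : finType) (e : rel V) : {set {set V}} :=
  [set A : {set V} | [exists x : V, exists y : V,
     [&& x != y, e x y & A == [set x; y]]]].

Definition nedges (V : finType) (e : rel V) : nat := #|edge_set e|.

Definition connected_graph (V : finType) (e : rel V) : Prop :=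
  forall x y : V, connect e x y.

Definition acyclic_graph (V : finType) (e : rel V) : Prop :=
  ~ (exists c : seq V, [&& uniq c, 2 < size c & cycle e c]).

Definition is_tree (V : finType) (e : rel V) : Prop :=
  [/\ simple_graph e, 0 < #|V|, connected_graph e & acyclic_graph e].

Definition contains_subgraph (V : finType) (eG : rel V)
    (U : finType) (eH : rel U) : Prop :=
  exists f : U -> V, injective f /\ (forall x y, eH x y -> eG (f x) (f y)).

From HB Require Import structures.
From mathcomp Require Import all_boot all_order all_algebra.
From mathcomp Require Import lra zify.
Import Order.TTheory GRing.Theory Num.Theory.
Set Implicit Arguments. Unset Strict Implicit. Unset Printing Implicit Defensive.

(* Deleting vertices of degree at most [c] from a graph with more than [c n]
   edges, with [t - 2 <= c] and [t - 1 <= 2 c], leaves a nonempty subgraph of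
   minimum degree [t - 1] having a vertex [v] of degree at least [t]. Let [l] be
   a leaf of the tree, with neighbour [p]. Embedding the tree greedily, with [p]
   sent to [v] and [l] last, every vertex placed before [l] finds a free
   neighbour because fewer than [t - 1] vertices are in use; [l] then goes to
   one of the [t] neighbours of [v]. *)

Lemma connect_exit (T : finType) (R : rel T) (A : {pred T}) x y :
  x \in A -> y \notin A -> connect R x y ->
  exists x1 y1, [/\ x1 \in A, y1 \notin A & R x1 y1].
Proof.
move=> xA yA /connectP[s]; elim: s x xA => [|z s IHs] x xA /=.
  by move=> _ yx; rewrite yx xA in yA.
case/andP=> Rxz zs y_last; have [zA | zA] := boolP (z \in A).
  exact: IHs zA zs y_last.
by exists x, z.
Qed.

Section Trees.
Variables (U : finType) (eT : rel U).
Hypothesis symT : symmetric eT.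

Definition induced (S : {set U}) : rel U :=
  [rel x y | [&& x \in S, y \in S & eT x y]].

Definition connected_in (S : {set U}) : Prop :=
  {in S &, forall x y, connect (induced S) x y}.

Lemma connected_inT : connected_graph eT -> connected_in setT.
Proof.
move=> conn x y _ _; rewrite (@eq_connect _ _ eT) ?conn // => a b.
by rewrite /induced /= !in_setT.
Qed.

Lemma connected_in1 r : connected_in [set r].
Proof. by move=> x y /set1P-> /set1P->; apply: connect0. Qed.

Lemma connected_inU1 S y z :
  connected_in S -> y \in S -> eT y z -> connected_in (z |: S).
Proof.
move=> Sconn yS eyz.
have widen x1 x2 : connect (induced S) x1 x2 -> connect (induced (z |: S)) x1 x2.
  apply: connect_sub => a b /and3P[aS bS eab]; apply: connect1.
  by rewrite /induced /= !in_setU1 aS bS eab !orbT.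
have zy : connect (induced (z |: S)) z y.
  by apply: connect1; rewrite /induced /= !in_setU1 eqxx yS orbT symT eyz.
have yz : connect (induced (z |: S)) y z.
  by apply: connect1; rewrite /induced /= !in_setU1 eqxx yS orbT eyz.
move=> x1 x2; rewrite !in_setU1 => /predU1P[->|x1S] /predU1P[->|x2S].
- exact: connect0.
- exact: connect_trans zy (widen _ _ (Sconn _ _ yS x2S)).
- exact: connect_trans (widen _ _ (Sconn _ _ x1S yS)) yz.
- exact: widen (Sconn _ _ x1S x2S).
Qed.

(* A simple path never passes through a leaf, since both its neighbours on the
   path would be the leaf's unique neighbour. *)
Lemma connected_in_setC1_leaf l p :
  connected_graph eT -> (forall y, eT l y -> y = p) -> connected_in (~: [set l]).
Proof.
move=> conn leaf x y; rewrite !inE => xl yl.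
have /connectP[s0 s0_path y_last0] := conn x y.
case: (shortenP s0_path) y_last0 => s s_path s_uniq _ {s0 s0_path} y_last.
have ls : l \notin s.
  apply/negP => ls; move: s_path s_uniq y_last; case/splitPr: ls => s1 s2.
  rewrite cat_path -cat_cons cat_uniq /= => /and3P[_ el].
  case: s2 => [_ _|a s2 /andP[/leaf ap _] /and3P[_ + _] _].
    by rewrite last_cat => yl'; rewrite yl' eqxx in yl.
  by rewrite symT in el; rewrite /= ap -(leaf _ el) mem_last orbT.
apply/connectP; exists s => //.
apply: (sub_in_path (P := [pred w | w != l])); last exact: s_path.
  by move=> a b al bl eab; rewrite /induced /= !inE eab andbT; apply/andP.
apply/allP => a /predU1P[-> //|sa].
by apply: contraNneq ls => <-.
Qed.

Lemma connected_in_ind (S0 : {set U}) (P : {set U} -> Prop) :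
  connected_in S0 ->
  (forall (S : {set U}) y z, S \subset S0 -> connected_in S -> y \in S ->
     z \in S0 :\: S -> eT y z -> P S -> P (z |: S)) ->
  forall (S : {set U}) r, S \subset S0 -> connected_in S -> r \in S -> P S -> P S0.
Proof.
move=> S0conn grow S r; move: {2}#|S0 :\: S| (erefl #|S0 :\: S|) => n.
elim: n S => [|n IHn] S gap SS0 Sconn rS PS.
  suff -> : S0 = S by [].
  by apply/eqP; rewrite eqEsubset SS0 -setD_eq0 -cards_eq0 gap.
have [x xS0S] : exists x, x \in S0 :\: S by apply/set0Pn; rewrite -card_gt0 gap.
case/setDP: xS0S => xS0 xS.
have [y [z [yS zS /and3P[_ zS0 eyz]]]] :=
  connect_exit rS xS (S0conn _ _ (subsetP SS0 _ rS) xS0).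
have zS0S : z \in S0 :\: S by rewrite inE zS zS0.
apply: (IHn (z |: S)) (grow _ _ _ SS0 Sconn yS zS0S eyz PS).
- move: gap; rewrite (cardsD1 z) zS0S add1n => -[<-].
  by apply: eq_card => w; rewrite !inE negb_or andbA.
- by rewrite subUset sub1set zS0 SS0.
- exact: connected_inU1 Sconn yS eyz.
- by rewrite in_setU1 rS orbT.
Qed.

Hypothesis irrT : irreflexive eT.

Lemma edge_set2 x y : eT x y -> [set x; y] \in edge_set eT.
Proof.
move=> exy; rewrite inE; apply/existsP; exists x; apply/existsP; exists y.
by rewrite exy eqxx !andbT; apply: contraTneq exy => ->; rewrite irrT.
Qed.

Lemma connected_card_le_nedges : connected_graph eT -> #|U| <= (nedges eT).+1.
Proof.
move=> conn; have [-> // | /card_gt0P[r _]] := posnP #|U|.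
pose inner (S : {set U}) := [set A in edge_set eT | A \subset S].
suff : #|[set: U]| <= #|inner setT|.+1.
  rewrite cardsT /nedges (_ : inner setT = edge_set eT) //.
  by apply/setP => A; rewrite inE subsetT andbT.
apply: (connected_in_ind (P := fun S => #|S| <= #|inner S|.+1) (connected_inT conn)
  _ (subsetT [set r]) (@connected_in1 r) (set11 r)); last by rewrite cards1.
move=> S y z _ _ yS /setDP[_ zS] eyz IH.
have : inner S \proper inner (z |: S).
  apply/properP; split.
    apply/subsetP => A; rewrite !inE => /andP[-> AS].
    exact: subset_trans AS (subsetUr _ _).
  exists [set y; z]; rewrite inE edge_set2 //=.
    by apply/subsetP => w; rewrite !inE => /orP[]/eqP->; rewrite ?eqxx ?yS ?orbT.
  by apply/negP => /subsetP/(_ z); rewrite !inE eqxx orbT (negbTE zS) => /(_ isT).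
by move/proper_card; rewrite cardsU1 zS; lia.
Qed.

Hypothesis acycT : acyclic_graph eT.

Lemma connected_in_unique_neighbor S u s1 s2 :
  connected_in S -> u \notin S -> s1 \in S -> s2 \in S -> eT u s1 -> eT u s2 ->
  s1 = s2.
Proof.
move=> Sconn uS s1S s2S eus1 eus2; apply/eqP/negPn/negP => s12.
have /connectP[q0 q0_path s2_last0] := Sconn _ _ s1S s2S.
case: (shortenP q0_path) s2_last0 => q q_path q_uniq _ {q0 q0_path} s2_last.
have qS : all (mem S) q.
  elim: q s1 q_path {s1S eus1 q_uniq s2_last s12} => //= a q IHq b.
  by case/andP=> /and3P[_ -> _] /IHq.
apply: acycT; exists [:: u, s1 & q]; apply/and3P; split.
- rewrite cons_uniq q_uniq andbT in_cons negb_or; apply/andP; split.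
    by apply: contraNneq uS => ->.
  by apply: contra uS => /(allP qS).
- by case: q {q_path q_uniq qS} s2_last => [/= s21|//]; rewrite s21 eqxx in s12.
- rewrite /= eus1 rcons_path -s2_last symT eus2 andbT.
  by apply: sub_path q_path => a b /and3P[].
Qed.

Lemma tree_has_leaf (x y : U) : connected_graph eT -> x != y ->
  exists l p, eT l p /\ forall w, eT l w -> w = p.
Proof.
move=> conn xy.
pose has_leaf := exists l p, eT l p /\ forall w, eT l w -> w = p.
suff [/negP[] // | //] : [set: U] != [set: U] \/ has_leaf.
apply: (connected_in_ind (P := fun S : {set U} => S != [set: U] \/ has_leaf)
  (connected_inT conn) _ (subsetT [set x]) (@connected_in1 x) (set11 x)).
  move=> S z1 z2 _ Sconn z1S /setDP[_ z2S] ez12 _.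
  have [S12T | ] := eqVneq (z2 |: S) setT; last by left.
  right; exists z2, z1; split; first by rewrite symT.
  move=> w ez2w; have : w \in z2 |: S by rewrite S12T inE.
  case/setU1P => [wz2 | wS]; first by rewrite wz2 irrT in ez2w.
  by apply: connected_in_unique_neighbor Sconn z2S wS z1S ez2w _; rewrite symT.
by left; apply/negP => /eqP/setP/(_ y); rewrite !inE eq_sym (negbTE xy).
Qed.

End Trees.

Section Degrees.
Variables (V : finType) (e : rel V).
Hypotheses (sym : symmetric e) (irr : irreflexive e).

Definition deg_in (W : {set V}) x := #|[set y in W | e x y]|.

Definition degsum (W : {set V}) := \sum_(x in W) deg_in W x.

Lemma deg_in_setD1 (W : {set V}) x a :
  x \in W -> deg_in W a = e a x + deg_in (W :\ x) a.
Proof.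
move=> xW; rewrite /deg_in (cardsD1 x) inE xW /=; congr (_ + _).
by apply: eq_card => y; rewrite !inE andbA.
Qed.

Lemma degsum_setD1 (W : {set V}) x :
  x \in W -> degsum W = degsum (W :\ x) + 2 * deg_in W x.
Proof.
move=> xW; rewrite /degsum (bigD1 x) //=.
rewrite (eq_bigl (mem (W :\ x))) => [|a]; last by rewrite !inE andbC.
rewrite (eq_bigr _ (fun a _ => deg_in_setD1 a xW)) big_split /=.
suff -> : \sum_(a in W :\ x) (e a x : nat) = deg_in W x by lia.
rewrite /deg_in -sum1_card big_mkcond [RHS]big_mkcond /=; apply: eq_bigr => a _.
rewrite !inE sym; case: eqVneq => [->|_]; rewrite ?irr ?andbF //=.
by case: (a \in W); case: (e x a).
Qed.

Lemma double_nedges_le_degsum : 2 * nedges e <= degsum setT.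
Proof.
have -> : degsum setT = \sum_(p : V * V | e p.1 p.2) 1.
  rewrite -(pair_big_dep xpredT (fun x y => e x y) (fun _ _ => 1)) /degsum.
  apply: eq_big => [x|x _]; first by rewrite inE.
  by rewrite /deg_in sum1dep_card; apply: eq_card => y; rewrite !inE.
rewrite (partition_big (fun p : V * V => [set p.1; p.2]) (mem (edge_set e))) /=;
  last by move=> [x y] /= exy; apply: edge_set2.
rewrite /nedges mulnC -sum_nat_const; apply: leq_sum => A.
rewrite inE => /existsP[x /existsP[y /and3P[xy exy /eqP ->]]].
rewrite sum1dep_card (_ : 2 = #|[set (x, y); (y, x)]|); last first.
  by rewrite cards2 xpair_eqE negb_and xy.
apply/subset_leq_card/subsetP => -[a b]; rewrite !inE /=.
case/orP => /eqP[-> ->]; first by rewrite exy eqxx.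
by rewrite sym exy setUC eqxx.
Qed.

(* A minimal W with [2 c #|W| < degsum W] can lose no vertex of degree [<= c],
   so it has minimum degree [k]; it cannot be [k]-regular since [k <= 2 c]. *)
Lemma dense_subgraph (R : realFieldType) (c : R) k :
  (c * #|V|%:R < (nedges e)%:R)%R -> (k%:R - 1 <= c)%R -> (k%:R <= 2 * c)%R ->
  exists (W : {set V}) v,
    [/\ {in W, forall x, k <= deg_in W x}, v \in W & k < deg_in W v].
Proof.
move=> dense k_le_c1 k_le_2c.
pose heavy (W : {set V}) := (2 * c * #|W|%:R < (degsum W)%:R)%R.
have heavyT : heavy setT.
  rewrite /heavy cardsT; apply: lt_le_trans (_ : (2 * (nedges e)%:R <= _)%R).
    by rewrite -mulrA ltr_pM2l.
  by rewrite -natrM ler_nat double_nedges_le_degsum.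
case: (arg_minnP (fun W : {set V} => #|W|) heavyT) => W heavyW minW.
have min_deg : {in W, forall x, k <= deg_in W x}.
  move=> x xW; rewrite leqNgt; apply/negP => small.
  suff /minW : heavy (W :\ x) by rewrite (cardsD1 x W) xW; lia.
  have {}small : ((deg_in W x)%:R + 1 <= k%:R :> R)%R by rewrite natr1 ler_nat.
  move: heavyW; rewrite /heavy (degsum_setD1 xW) (cardsD1 x W) xW !natrD mulr1n.
  lra.
have [v /andP[vW kv] | regular] := pickP (fun x => (x \in W) && (k < deg_in W x)).
  by exists W, v.
exfalso; have : degsum W <= #|W| * k.
  rewrite /degsum -sum_nat_const; apply: leq_sum => x xW.
  by move: (regular x); rewrite xW /= => /negbT; rewrite -leqNgt.
rewrite -(ler_nat R) natrM; move: heavyW; rewrite /heavy => h1 h2.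
have : (0 <= #|W|%:R :> R)%R by [].
nra.
Qed.
End Degrees.

Section Embedding.
Variables (U V : finType) (eT : rel U) (e : rel V) (W : {set V}).
Hypotheses (symT : symmetric eT) (irrT : irreflexive eT) (acycT : acyclic_graph eT).
Hypotheses (sym : symmetric e) (irr : irreflexive e).

Definition embeds_on (S : {set U}) (f : U -> V) :=
  [/\ {in S &, injective f}, {in S, forall x, f x \in W}
    & {in S &, forall x y, eT x y -> e (f x) (f y)}].

Lemma embeds_onU1 S f y z :
  connected_in eT S -> embeds_on S f -> y \in S -> z \notin S -> eT y z ->
  #|S| <= deg_in e W (f y) ->
  exists2 g, embeds_on (z |: S) g & {in S, g =1 f}.
Proof.
move=> Sconn [finj fW fE] yS zS eyz deg_fy.
have [w [wW efyw wfS]] : exists w, [/\ w \in W, e (f y) w & w \notin f @: S].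
  have : ~~ ([set w in W | e (f y) w] \subset f @: S :\ f y).
    apply: contraTN deg_fy => /subset_leq_card; rewrite /deg_in -ltnNge.
    by have := cardsD1 (f y) (f @: S); rewrite imset_f // card_in_imset //; lia.
  case/subsetPn => w; rewrite !inE => /andP[wW efyw].
  rewrite negb_and negbK => /orP[/eqP wfy | wfS]; last by exists w.
  by rewrite wfy irr in efyw.
pose g x := if x == z then w else f x.
have gz : g z = w by rewrite /g eqxx.
have gS : {in S, g =1 f}.
  by move=> x xS; rewrite /g; case: eqVneq xS => // -> zS'; rewrite zS' in zS.
have z_nbr x : x \in S -> eT z x -> x = y.
  move=> xS ezx; have ezy : eT z y by rewrite symT.
  exact (connected_in_unique_neighbor symT acycT Sconn zS xS yS ezx ezy).
exists g => //; split.
- move=> x1 x2 /setU1P[-> | x1S] /setU1P[-> | x2S] //;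
    rewrite ?gz ?(gS _ x1S) ?(gS _ x2S).
  + by move=> wfx; rewrite wfx imset_f in wfS.
  + by move=> fxw; rewrite -fxw imset_f in wfS.
  + exact: finj.
- by move=> x /setU1P[-> | xS]; rewrite ?gz ?(gS _ xS) ?fW.
- move=> x1 x2 /setU1P[-> | x1S] /setU1P[-> | x2S];
    rewrite ?gz ?(gS _ x1S) ?(gS _ x2S).
  + by rewrite irrT.
  + by move=> /(z_nbr _ x2S) ->; rewrite sym.
  + by rewrite symT => /(z_nbr _ x1S) ->.
  + exact: fE.
Qed.

(* Embed the tree minus the leaf [l] greedily from [p], then attach [l] to the
   image [v] of [p], whose degree exceeds [k]. *)
Lemma tree_embeds k l p v :
  connected_graph eT -> #|U| <= k.+2 -> eT l p -> (forall y, eT l y -> y = p) ->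
  {in W, forall x, k <= deg_in e W x} -> v \in W -> k < deg_in e W v ->
  contains_subgraph e eT.
Proof.
move=> conn Ucard elp leaf min_deg vW v_deg.
have pl : p \in ~: [set l] by rewrite !inE; apply: contraTneq elp => ->; rewrite irrT.
have Tl_conn := connected_in_setC1_leaf symT conn leaf.
pose P (S : {set U}) := p \in S /\ exists2 f, embeds_on S f & f p = v.
have [_ [f fTl fp]] : P (~: [set l]).
  have pTl : [set p] \subset ~: [set l] by rewrite sub1set.
  apply: (connected_in_ind symT Tl_conn _ pTl (@connected_in1 _ eT p) (set11 p)).
    move=> S y z STl Sconn yS /setDP[zTl zS] eyz [pS [f fS fp]].
    have S_small : #|S| <= k.
      have := subset_leq_card (_ : z |: S \subset ~: [set l]).
      by rewrite cardsC1 cardsU1 zS subUset sub1set zTl STl; lia.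
    have deg_fy : #|S| <= deg_in e W (f y).
      by case: fS => _ fW _; apply: leq_trans S_small (min_deg _ (fW _ yS)).
    have [g gS gf] := embeds_onU1 Sconn fS yS zS eyz deg_fy.
    by split; [rewrite in_setU1 pS orbT | exists g; rewrite ?gf].
  split; first exact: set11.
  exists (fun=> v); last by []; split.
  - by move=> x1 x2 /set1P-> /set1P->.
  - by [].
  - by move=> x1 x2 /set1P-> /set1P->; rewrite irrT.
have epl : eT p l by rewrite symT.
have lTl : l \notin ~: [set l] by rewrite !inE negbK.
have deg_fp : #|~: [set l]| <= deg_in e W (f p) by rewrite fp cardsC1; lia.
have [g [ginj _ gE] _] := embeds_onU1 Tl_conn fTl pl lTl epl deg_fp.
rewrite setUCr in ginj gE.
by exists g; split=> [x1 x2 | x1 x2]; [apply: ginj | apply: gE]; rewrite inE.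
Qed.

End Embedding.

Lemma threshold_bounds (R : realFieldType) (a k : nat) :
  (2 <= a)%N -> (k <= a)%N ->
  (k%:R - 1 <= (1 - 1 / a%:R) * k%:R :> R /\
   k%:R <= 2 * ((1 - 1 / a%:R) * k%:R) :> R)%R.
Proof.
move=> a_ge2 ka; rewrite -!(ler_nat R) in a_ge2 ka.
have a_gt0 : (0 < a%:R :> R)%R by apply: lt_le_trans a_ge2.
have inv_a : (1 / a%:R * a%:R = 1 :> R)%R by rewrite mul1r mulVf ?gt_eqF.
have inv_a_ge0 : (0 <= 1 / a%:R :> R)%R by rewrite divr_ge0 ?ltW.
have k_ge0 : (0 <= k%:R :> R)%R by [].
split; nra.
Qed.

Theorem proposition4p2 (t : nat) (V : finType) (e : rel V) :
  (0 < t)%N ->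
  simple_graph e ->
  (if odd t then
     ((1 - 1 / (t.+1)%:R) * (t.-1)%:R * (#|V|)%:R < (nedges e)%:R :> rat)%R
   else
     ((1 - 1 / t%:R) * (t.-1)%:R * (#|V|)%:R < (nedges e)%:R :> rat)%R) ->
  forall (U : finType) (eT : rel U),
    is_tree eT -> nedges eT = t -> contains_subgraph e eT.
Proof.
move=> t_gt0 [sym irr] dense U eT [[symT irrT] _ connT acycT] nT.
have [a [a_ge2 ka dense_a]] : exists a, [/\ (2 <= a)%N, (t.-1 <= a)%N &
    ((1 - 1 / a%:R) * (t.-1)%:R * #|V|%:R < (nedges e)%:R :> rat)%R].
  case: ifP dense => [_ | t_even] dense; first by exists t.+1; split=> //; lia.
  exists t; split=> //; last by lia.
  by case: t t_gt0 t_even {dense nT} => [|[]].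
have [k_le_c1 k_le_2c] := threshold_bounds rat a_ge2 ka.
have [W [v [min_deg vW v_deg]]] := dense_subgraph sym irr dense_a k_le_c1 k_le_2c.
have /card_gt0P[A] : (0 < #|edge_set eT|)%N by rewrite -/(nedges eT) nT.
rewrite inE => /existsP[x /existsP[y /and3P[xy _ _]]].
have [l [p [elp leaf]]] := tree_has_leaf symT irrT acycT connT xy.
have Ucard : (#|U| <= (t.-1).+2)%N.
  by have := connected_card_le_nedges symT irrT connT; rewrite nT; lia.
exact (tree_embeds symT irrT acycT sym irr connT Ucard elp leaf min_deg vW v_deg).
Qed.
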